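(* Let $q$ be an odd prime power. Then (i) $\prod\{a\in{\mathbb F}_q^\times: a \text{ and } 4-a \text{ are nonsquares in }{\mathbb F}_q\}=2$; (ii) $\prod\{a\in{\mathbb F}_q^\times: -a \text{ and } 4+a \text{ are nonsquares in }{\mathbb F}_q\}=2$ if $q\equiv\pm1\pmod 8$ and $=-2$ if $q\equiv\pm3\pmod 8$. *)

From HB Require Import structures.
From mathcomp Require Import all_boot all_order all_algebra all_field.
Set Implicit Arguments. Unset Strict Implicit. Unset Printing Implicit Defensive.
Import GRing.Theory.
Local Open Scope ring_scope.

Definition is_square (F : finFieldType) (a : F) : bool := [exists b : F, b ^+ 2 == a].

(* Write q = 2m + 1 and S = {a | a and 4 - a are nonsquares}.  Euler's
   criterion x^m = ±1 turns the count of S into character sums, giving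
   2|S| + [-1 is a square] = m + 1.
   If -1 is a nonsquare, a |-> 16/a is an involution of S whose only possible
   fixed point is -4 (in S iff 2 is a nonsquare); pairing a with 16/a and
   evaluating 2^m by Euler's criterion gives the product 2.
   If -1 is a square, t |-> (1 + t)(1 + 1/t) maps the nonsquares onto S with
   fibres {t, 1/t}, so the product over S is the product of 1 + t over all
   nonsquares t, i.e. the value at -1 of X^m + 1 = prod (X - t), which is 2.
   Part (ii) is part (i) under a |-> -a, with the sign (-1)^|S| read off from
   the count of S. *)

From HB Require Import structures.
From mathcomp Require Import all_boot all_order all_algebra all_solvable all_field.
From mathcomp Require Import ring zify.
Import GRing.Theory.
Local Open Scope ring_scope.

Section FiniteSums.

Set Implicit Arguments.
Unset Strict Implicit.

Variable T : finType.

Lemma prod_involution_pairs (R : comNzRingType) (A : {set T})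
    (f : T -> T) (g : T -> R) (c : R) :
  {in A, forall x, f x \in A} -> {in A, involutive f} ->
  {in A, forall x, f x != x} -> {in A, forall x, g x * g (f x) = c} ->
  exists k, #|A| = k.*2 /\ \prod_(x in A) g x = c ^+ k.
Proof.
have [n] := ubnP #|A|; elim: n A => // n IHn A ltAn fA ffA fxA gA.
have [->|[x xA]] := set_0Vmem A; first by exists 0%N; rewrite cards0 big_set0.
set B := A :\ x :\ f x.
have fxAx : f x \in A :\ x by rewrite !inE fxA // fA.
have cardA : #|A| = #|B|.+2.
  by rewrite (cardsD1 x) xA (cardsD1 (f x) (A :\ x)) fxAx.
have sBA : {subset B <= A} by move=> y /setD1P[_ /setD1P[]].
have fB : {in B, forall y, f y \in B}.
  move=> y yB; have [yfx yx yA] : [/\ y != f x, y != x & y \in A].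
    by move: yB; rewrite !inE => /and3P.
  rewrite !inE fA // andbT; apply/andP; split.
    by apply: contra yx => /eqP fyfx; rewrite -[y]ffA // fyfx ffA.
  by apply: contra yfx => /eqP fyx; rewrite -[y]ffA // fyx.
have ltBn : (#|B| < n)%N by rewrite cardA in ltAn; exact: ltnW.
have [k [cardB prodB]] := IHn B ltBn fB (sub_in1 sBA ffA) (sub_in1 sBA fxA) (sub_in1 sBA gA).
exists k.+1; split; first by rewrite cardA cardB.
rewrite (big_setD1 x) // (big_setD1 (f x)) //= -/B prodB.
by rewrite mulrA gA // exprS.
Qed.

Lemma sum_nat_indicator (A b : pred T) :
  (\sum_(x | A x) (b x : nat))%N = #|[set x | A x && b x]|.
Proof.
rewrite -sum1_card big_mkcond [RHS]big_mkcond; apply: eq_bigr => x _ /=.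
by rewrite inE; case: (A x); case: (b x).
Qed.

End FiniteSums.

Section OddFiniteField.

Set Implicit Arguments.
Unset Strict Implicit.

Variable F : finFieldType.
Hypothesis oddF : odd #|F|.
Implicit Types a b c t u x y : F.

Local Notation m := (#|F|./2).

Lemma is_squareP a : reflect (exists b, b ^+ 2 = a) (is_square a).
Proof. by apply: (iffP existsP) => [[b /eqP]|[b <-]]; exists b. Qed.

Lemma is_square_sqr b : is_square (b ^+ 2).
Proof. by apply/is_squareP; exists b. Qed.

Lemma is_square0 : is_square (0 : F).
Proof. by apply/is_squareP; exists 0; rewrite expr0n. Qed.

Lemma is_square1 : is_square (1 : F).
Proof. by rewrite -(expr1n F 2) is_square_sqr. Qed.

Lemma nonsquare_neq0 a : ~~ is_square a -> a != 0.
Proof. by apply: contraNneq => ->; exact: is_square0. Qed.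

Lemma is_squareMsqr a u : u != 0 -> is_square (a * u ^+ 2) = is_square a.
Proof.
move=> u0; apply/is_squareP/is_squareP => [[b ab]|[b <-]]; last first.
  by exists (b * u); rewrite exprMn.
by exists (b / u); rewrite expr_div_n ab mulfK // expf_neq0.
Qed.

Lemma card_F : #|F| = m.*2.+1.
Proof. by rewrite -[LHS]odd_double_half oddF. Qed.

Lemma half_card_gt0 : (0 < m)%N.
Proof. by have := finNzRing_gt1 F; rewrite card_F; case: (m). Qed.

Lemma two_neq0 : (2 : F) != 0.
Proof.
apply: contraTneq oddF => two0.
have pcharF2 : 2%N \in [pchar F] by rewrite inE /= two0 eqxx.
have /p_natP[k cardF] : (2%N).-nat #|F|.
  by rewrite -cardsT; apply: abelem_pgroup (fin_ring_pchar_abelem pcharF2).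
have := finNzRing_gt1 F; rewrite cardF oddX orbF.
by case: k {cardF}.
Qed.

Lemma one_neq_N1 : (1 : F) != -1.
Proof. by rewrite -addr_eq0 -mulr2n two_neq0. Qed.

Lemma expf_half_sqr a : a != 0 -> (a ^+ m) ^+ 2 = 1.
Proof.
move=> a0; apply: (mulfI a0); rewrite mulr1 -exprM muln2 -exprS -card_F.
exact: expf_card.
Qed.

Lemma card_halfpow_roots : (#|[set x : F | x ^+ m == 1%R]| <= m)%N.
Proof.
have Xm1_neq0 : 'X^m - 1%:P != 0 :> {poly F}.
  by rewrite -size_poly_eq0 size_XnsubC ?half_card_gt0.
rewrite cardE -ltnS -(size_XnsubC (1 : F) half_card_gt0).
apply: max_poly_roots Xm1_neq0 _ (enum_uniq _).
apply/allP => x; rewrite mem_enum inE => /eqP xm.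
by rewrite rootE !hornerE xm subrr.
Qed.

Lemma half_card_le_squares : (m <= #|[set x : F | (x != 0%R) && is_square x]|)%N.
Proof.
have card_nz : #|[set x : F | x != 0]| = m.*2.
  have := cardsC1 (0 : F); rewrite [in X in _ = X]card_F /= => <-.
  by apply: eq_card => x; rewrite !inE.
rewrite -leq_double -card_nz -mul2n -sum1_card.
rewrite (partition_big (fun x => x ^+ 2) (mem [set x | (x != 0) && is_square x])).
  rewrite mulnC -sum_nat_const; apply: leq_sum => y /[!inE] /andP[_ /is_squareP[r <-]].
  apply: (@leq_trans #|[set r; - r]|); last by rewrite cards2; case: (_ != _).
  rewrite sum1_card; apply/subset_leq_card/subsetP => x.
  by rewrite unfold_in !inE eqf_sqr => /andP[].
by move=> x /[!inE] x0; rewrite expf_neq0 ?is_square_sqr.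
Qed.

Lemma expf_half_square a : a != 0 -> is_square a -> a ^+ m = 1.
Proof.
move=> a0 /is_squareP[b ba].
have b0 : b != 0 by apply: contraNneq a0 => b0; rewrite -ba b0 expr0n.
by rewrite -ba -exprM mulnC exprM expf_half_sqr.
Qed.

Lemma nonzero_squares_sub_halfpow_roots :
  [set x : F | (x != 0) && is_square x] \subset [set x | x ^+ m == 1].
Proof. by apply/subsetP => x /[!inE] /andP[x0 /(expf_half_square x0) ->]. Qed.

Lemma card_nonzero_squares : #|[set x : F | (x != 0) && is_square x]| = m.
Proof.
apply/eqP; rewrite eqn_leq half_card_le_squares andbT.
exact: leq_trans (subset_leq_card nonzero_squares_sub_halfpow_roots) card_halfpow_roots.
Qed.

Lemma euler_criterion a : a != 0 -> a ^+ m = if is_square a then 1 else -1.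
Proof.
move=> a0; case: ifP => [/(expf_half_square a0) //|nsq_a].
have cardSR : #|[set x : F | (x != 0) && is_square x]| = #|[set x : F | x ^+ m == 1]|.
  apply/eqP; rewrite eqn_leq subset_leq_card ?nonzero_squares_sub_halfpow_roots //.
  by rewrite card_nonzero_squares card_halfpow_roots.
move/eqP: (expf_half_sqr a0); rewrite sqrf_eq1 => /orP[/eqP am1|/eqP //].
have : a \in [set x : F | x ^+ m == 1] by rewrite inE am1.
by rewrite -(subset_cardP cardSR nonzero_squares_sub_halfpow_roots) inE a0 nsq_a.
Qed.

Lemma is_squareM a b :
  a != 0 -> b != 0 -> is_square (a * b) = (is_square a == is_square b).
Proof.
move=> a0 b0; have := euler_criterion (mulf_neq0 a0 b0).
rewrite exprMn (euler_criterion a0) (euler_criterion b0).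
have N1_neq1 : (-1 : F) != 1 by rewrite eq_sym one_neq_N1.
case: (is_square a); case: (is_square b); case: (is_square (a * b));
  rewrite ?mul1r ?mulr1 ?mulN1r ?opprK //= => /eqP;
  by rewrite ?(negPf one_neq_N1) ?(negPf N1_neq1).
Qed.

Lemma is_squareV a : is_square a^-1 = is_square a.
Proof.
have [->|a0] := eqVneq a 0; first by rewrite invr0.
by rewrite -[in RHS](is_squareMsqr _ (invr_neq0 a0)) expr2 mulrA mulfV // mul1r.
Qed.

Lemma is_square_N1 : is_square (-1 : F) = ~~ odd m.
Proof.
have N1_neq0 : (-1 : F) != 0 by rewrite oppr_eq0 oner_eq0.
have := euler_criterion N1_neq0; rewrite -signr_odd.
by case: (odd m); case: (is_square _) => //= /eqP;
  rewrite ?(negPf one_neq_N1) // eq_sym (negPf one_neq_N1).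
Qed.

Lemma card_nonsquares : #|[set x : F | ~~ is_square x]| = m.
Proof.
have sq_split : [set x : F | is_square x] = 0 |: [set x | (x != 0) && is_square x].
  by apply/setP => x; rewrite !inE; case: eqVneq => [->|]; rewrite ?is_square0.
have nsq_compl : [set x : F | ~~ is_square x] = ~: [set x | is_square x].
  by apply/setP => x; rewrite !inE.
have := cardsC [set x : F | is_square x].
rewrite -nsq_compl {1}sq_split cardsU1 !inE eqxx card_nonzero_squares card_F.
lia.
Qed.

Lemma prod_nonsquares_XsubC :
  \prod_(t in [set x : F | ~~ is_square x]) ('X - t%:P) = 'X^m + 1%:P.
Proof.
set N := [set x : F | ~~ is_square x].
have size_Xm1 : size ('X^m + 1%:P : {poly F}) = (size (enum N)).+1.
  by rewrite size_XnaddC ?half_card_gt0 // -cardE card_nonsquares.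
have roots_N : all (root ('X^m + 1%:P)) (enum N).
  apply/allP => t; rewrite mem_enum inE => nsq_t.
  by rewrite rootE !hornerE (euler_criterion (nonsquare_neq0 nsq_t)) (negPf nsq_t) addNr.
have uniq_N : uniq_roots (enum N) by rewrite uniq_rootsE enum_uniq.
rewrite [RHS](all_roots_prod_XsubC size_Xm1 roots_N uniq_N).
by rewrite (monicP (monicXnaddC _ half_card_gt0)) scale1r big_enum.
Qed.

Lemma prod_one_add_nonsquares :
  ~~ odd m -> \prod_(t in [set x : F | ~~ is_square x]) (1 + t) = 2.
Proof.
move=> even_m; have := congr1 (horner^~ (-1)) prod_nonsquares_XsubC.
rewrite horner_prod !hornerE -signr_odd (negPf even_m) expr0.
under eq_bigr => t _ do rewrite hornerXsubC -opprD.
by rewrite prodrN card_nonsquares -signr_odd (negPf even_m) expr0 mul1r.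
Qed.

Definition nonsquare_split c a := ~~ is_square a && ~~ is_square (c - a).

Lemma nonsquare_splitE c a :
  nonsquare_split c a = (a != 0) && ~~ is_square a && ~~ is_square (c - a).
Proof.
rewrite /nonsquare_split.
by case: (boolP (is_square a)) => [_|/nonsquare_neq0 ->]; rewrite ?andbF.
Qed.

Section NonsquareSplitCount.

Variable c : F.
Hypotheses (c0 : c != 0) (sq_c : is_square c).

Let D := [set a : F | (a != 0) && (a != c)].

Lemma card_punctured : (#|D| + 2 = m.*2.+1)%N.
Proof.
rewrite -card_F -(cardC D); congr (_ + _)%N.
transitivity #|[set 0; c]|; first by rewrite cards2 eq_sym c0.
by apply: eq_card => a; rewrite !inE negb_and !negbK.
Qed.

Lemma sum_nonsquare : (\sum_(a in D) (~~ is_square a : nat))%N = m.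
Proof.
rewrite sum_nat_indicator -card_nonsquares; apply: eq_card => a; rewrite !inE.
have [->|_] := eqVneq a 0; first by rewrite is_square0.
by have [->|_] := eqVneq a c; rewrite ?sq_c ?andbF.
Qed.

Lemma sum_nonsquare_sub : (\sum_(a in D) (~~ is_square (c - a)%R : nat))%N = m.
Proof.
rewrite -sum_nonsquare (reindex_inj (subrI c)) /=.
apply: eq_big => [a|a _]; last by rewrite subKr.
rewrite !inE.
have -> : (c - a == c) = (a == 0) by rewrite -subr_eq0 addrAC subrr sub0r oppr_eq0.
by rewrite subr_eq0 eq_sym andbC.
Qed.

Lemma sum_same_squareness :
  (\sum_(a in D) ((is_square a == is_square (c - a)%R) : nat) + is_square (-1 : F)%R)%N = m.
Proof.
(* a (c - a) = (c/a - 1) a^2, and a |-> c/a - 1 maps F - {0, c} onto F - {0, -1}. *)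
have same_sq a : a \in D -> (is_square a == is_square (c - a)) = is_square (c / a - 1).
  rewrite inE => /andP[a0 ac]; have ca0 : c - a != 0 by rewrite subr_eq0 eq_sym.
  by rewrite -is_squareM // -(is_squareMsqr (c / a - 1) a0); congr is_square; field.
rewrite (eq_bigr (fun a => is_square (c / a - 1) : nat)); last by move=> a /same_sq ->.
have shift_invK : cancel (fun b => c / (b + 1)) (fun a => c / a - 1).
  by move=> b; rewrite invf_div mulrC divfK // addrK.
rewrite (reindex_inj (can_inj shift_invK)) /=.
rewrite (eq_bigr (fun b => is_square b : nat)); last by move=> b _; have /= -> := shift_invK b.
have shifted_D b : (c / (b + 1) \in D) = (b != -1) && (b != 0).
  rewrite inE mulf_eq0 (negPf c0) invr_eq0 addr_eq0 /=; congr (_ && _).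
  by rewrite -[X in _ == X]mulr1 (inj_eq (mulfI c0)) invr_eq1 -subr_eq0 addrK.
rewrite (eq_bigl _ _ shifted_D) -card_nonzero_squares -sum_nat_indicator.
rewrite [RHS](bigD1 (-1)) /=; last by rewrite oppr_eq0 oner_eq0.
by rewrite addnC; congr (_ + _)%N; apply: eq_bigl => b; rewrite andbC.
Qed.

Lemma card_nonsquare_split :
  (#|nonsquare_split c| * 2 + is_square (-1 : F)%R = m + 1)%N.
Proof.
have sum_split : (\sum_(a in D) (nonsquare_split c a : nat))%N = #|nonsquare_split c|.
  rewrite sum_nat_indicator; apply: eq_card => a; rewrite !inE unfold_in /nonsquare_split.
  have [->|_] := eqVneq a c; first by rewrite subrr is_square0 !andbF.
  by case: (boolP (is_square a)) => [_|/nonsquare_neq0 ->]; rewrite ?andbF.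
have count_a a : ((~~ is_square a : nat) + (~~ is_square (c - a)%R : nat)
    + ((is_square a == is_square (c - a)%R) : nat) = 1 + (nonsquare_split c a : nat) * 2)%N.
  by rewrite /nonsquare_split; case: (is_square a); case: (is_square (c - a)).
have sums : (\sum_(a in D) ((~~ is_square a : nat) + (~~ is_square (c - a)%R : nat)
    + ((is_square a == is_square (c - a)%R) : nat))
    = \sum_(a in D) (1 + (nonsquare_split c a : nat) * 2))%N.
  by apply: eq_bigr => a _; exact: count_a.
rewrite !big_split -big_distrl /= sum_split sum_nonsquare sum_nonsquare_sub sum1_card in sums.
have := sum_same_squareness; have := card_punctured; move: sums.
(* [set] identifies two convertible copies of this sum for [lia]. *)
set same := (\sum_(a in D) _)%N; lia.
Qed.

End NonsquareSplitCount.

Lemma four_sqr : (4 : F) = 2 ^+ 2.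
Proof. by rewrite -natrX. Qed.

Lemma four_neq0 : (4 : F) != 0.
Proof. by rewrite four_sqr expf_neq0 ?two_neq0. Qed.

Lemma is_square4 : is_square (4 : F).
Proof. by rewrite four_sqr is_square_sqr. Qed.

Section NonsquareMinusOne.

Hypothesis nsq_N1 : ~~ is_square (-1 : F).

Lemma nonsquare_split4_inv a : nonsquare_split 4 a -> nonsquare_split 4 (16 / a).
Proof.
case/andP=> nsq_a nsq_4a; have a0 := nonsquare_neq0 nsq_a.
have a40 : 4 - a != 0 := nonsquare_neq0 nsq_4a.
have h4 := four_neq0; have h2 := two_neq0.
apply/andP; split.
  have -> : 16 / a = a * (4 / a) ^+ 2 by field.
  by rewrite is_squareMsqr // mulf_neq0 ?invr_eq0.
have -> : 4 - 16 / a = (-1 * ((4 - a) * a)) * (2 / a) ^+ 2 by field.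
rewrite is_squareMsqr ?mulf_neq0 ?invr_eq0 // is_squareM ?mulf_neq0 ?oppr_eq0 ?oner_eq0 //.
by rewrite is_squareM // (negPf nsq_N1) (negPf nsq_a) (negPf nsq_4a).
Qed.

Lemma nonsquare_split4_N4 : nonsquare_split 4 (-4) = ~~ is_square (2 : F).
Proof.
have eight : (4 - -4 : F) = 2 * 2 ^+ 2 by rewrite opprK four_sqr; ring.
have N4 : (-4 : F) = -1 * 2 ^+ 2 by rewrite mulN1r four_sqr.
rewrite /nonsquare_split eight N4.
by rewrite !is_squareMsqr ?two_neq0 // nsq_N1.
Qed.

Lemma prod_nonsquare_split4_pairs : exists k,
  #|nonsquare_split (4 : F)| = (k.*2 + ~~ is_square (2 : F)%R)%N /\
  \prod_(a | nonsquare_split (4 : F) a) a = (if is_square (2 : F) then 1 else -4) * 16 ^+ k.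
Proof.
have h16 : (16 : F) != 0 by rewrite -[16%N]/(4 * 4)%N natrM mulf_neq0 ?four_neq0.
set A := [set a | nonsquare_split 4 a && (a != -4)].
have A_neq0 a : a \in A -> a != 0.
  by rewrite inE => /andP[/andP[/nonsquare_neq0]].
have inv_invol : {in A, involutive (fun a => 16 / a)}.
  by move=> a /A_neq0 a0; field; rewrite a0.
have [k [cardA prodA]] : exists k, #|A| = k.*2 /\ \prod_(a in A) a = 16 ^+ k.
  apply: (prod_involution_pairs (f := fun a => 16 / a) (g := id))
    => [a Aa|//|a Aa|a /A_neq0 a0].
  - move: (Aa) (inv_invol a Aa); rewrite !inE => /andP[/nonsquare_split4_inv -> aN4] /= aK.
    apply: contraNneq aN4 => inv_a; rewrite -aK inv_a; apply/eqP; field.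
    by rewrite oppr_eq0 four_neq0.
  - have a0 := A_neq0 a Aa.
    apply: contraTneq Aa => fix_a; rewrite inE negb_and negbK.
    have : a ^+ 2 == 4 ^+ 2 by rewrite expr2 -{2}fix_a -natrX; apply/eqP; field.
    rewrite eqf_sqr => /orP[/eqP->|->]; last by rewrite orbT.
    by rewrite /nonsquare_split subrr is_square0 andbF.
  - by field; rewrite a0.
exists k; split.
  rewrite (cardD1 (-4)) -[-4 \in _]/(nonsquare_split 4 (-4)) nonsquare_split4_N4.
  by rewrite addnC -cardA; congr (_ + _)%N; apply: eq_card => a; rewrite !inE andbC.
rewrite -prodA -[is_square 2]negbK -nonsquare_split4_N4.
case: ifPn => [not_N4|/negPn N4].
  rewrite mul1r; apply: eq_bigl => a; rewrite inE.
  by have [->|] := eqVneq a (-4); rewrite ?andbT ?andbF ?(negPf not_N4).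
by rewrite (bigD1 (-4)) //=; congr (_ * _); apply: eq_bigl => a; rewrite inE.
Qed.

Lemma prod_nonsquare_split4_odd : \prod_(a | nonsquare_split 4 a) a = 2 :> F.
Proof.
have [k [cardS ->]] := prod_nonsquare_split4_pairs.
have := card_nonsquare_split four_neq0 is_square4.
rewrite (negPf nsq_N1) addn0 cardS => card_eq.
have sixteen : (16 : F) = 2 ^+ 4 by rewrite -natrX.
have := euler_criterion two_neq0; rewrite sixteen -exprM.
case: (is_square 2) card_eq => /= card_eq two_m.
  by rewrite mul1r (_ : (4 * k = m + 1)%N) ?exprD ?two_m ?mul1r //; lia.
rewrite four_sqr mulNr -exprD (_ : (2 + 4 * k = m + 1)%N); last by lia.
by rewrite exprD two_m expr1 mulN1r opprK.
Qed.

End NonsquareMinusOne.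

Definition pair_prod t := (1 + t) * (1 + t^-1).

Lemma pair_prodE t : t != 0 -> pair_prod t = t * ((1 + t) / t) ^+ 2.
Proof. by move=> t0; rewrite /pair_prod; field. Qed.

Lemma pair_prod_eq t u :
  t != 0 -> u != 0 -> (pair_prod u == pair_prod t) = (u == t) || (u == t^-1).
Proof.
move=> t0 u0; rewrite -subr_eq0.
have -> : pair_prod u - pair_prod t = (u - t) * (u - t^-1) / u.
  by rewrite /pair_prod; field; rewrite u0.
by rewrite !mulf_eq0 invr_eq0 (negPf u0) orbF !subr_eq0.
Qed.

Section SquareMinusOne.

Hypothesis sq_N1 : is_square (-1 : F).

Lemma nonsquare_split4_pair_prod t : ~~ is_square t -> nonsquare_split 4 (pair_prod t).
Proof.
move=> nsq_t; have t0 := nonsquare_neq0 nsq_t.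
have t1 : 1 + t != 0 by rewrite addrC addr_eq0; apply: contraNneq nsq_t => ->.
have t1' : 1 - t != 0 by rewrite subr_eq0; apply: contraNneq nsq_t => <-; exact: is_square1.
apply/andP; split; first by rewrite pair_prodE // is_squareMsqr // mulf_neq0 ?invr_eq0.
have -> : 4 - pair_prod t = (-1 * t) * ((1 - t) / t) ^+ 2 by rewrite /pair_prod; field.
rewrite is_squareMsqr ?mulf_neq0 ?invr_eq0 // is_squareM ?oppr_eq0 ?oner_eq0 //.
by rewrite sq_N1 (negPf nsq_t).
Qed.

Lemma pair_prod_onto a : nonsquare_split 4 a -> exists2 t, ~~ is_square t & pair_prod t = a.
Proof.
case/andP=> nsq_a nsq_4a; have a0 := nonsquare_neq0 nsq_a.
have := nonsquare_neq0 nsq_4a => a40.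
have /is_squareP[r disc] : is_square (a * (a - 4)).
  rewrite (_ : a * (a - 4) = -1 * (a * (4 - a))); last by ring.
  by rewrite !is_squareM ?mulf_neq0 ?oppr_eq0 ?oner_eq0 // sq_N1 (negPf nsq_a) (negPf nsq_4a).
pose t := (a - 2 + r) / 2; have h2 := two_neq0.
have t_root : t ^+ 2 + 1 = (a - 2) * t.
  apply/eqP; rewrite -subr_eq0.
  have -> : t ^+ 2 + 1 - (a - 2) * t = (r ^+ 2 - a * (a - 4)) / 4.
    by rewrite /t; field; rewrite four_neq0 two_neq0.
  by rewrite disc subrr mul0r.
have t0 : t != 0.
  by apply/eqP => t0; move: t_root; rewrite t0 expr0n mulr0 add0r => /eqP; rewrite oner_eq0.
have pp_t : pair_prod t = a.
  have -> : pair_prod t = (t ^+ 2 + 1) / t + 2 by rewrite /pair_prod; field.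
  by rewrite t_root; field.
exists t => //.
have t1 : 1 + t != 0 by apply: contraNneq a0 => t1; rewrite -pp_t /pair_prod t1 mul0r.
by rewrite -(is_squareMsqr t (mulf_neq0 t1 (invr_neq0 t0))) -pair_prodE // pp_t.
Qed.

Lemma prod_nonsquare_split4_even : \prod_(a | nonsquare_split 4 a) a = 2 :> F.
Proof.
have even_m : ~~ odd m by rewrite -is_square_N1.
rewrite -(prod_one_add_nonsquares even_m) [RHS](partition_big pair_prod (nonsquare_split 4)).
  2: by move=> t /[!inE]; exact: nonsquare_split4_pair_prod.
apply: eq_bigr => a /pair_prod_onto[t nsq_t <-]; have t0 := nonsquare_neq0 nsq_t.
have tV_neq_t : t^-1 != t.
  apply: contraNneq nsq_t => tVt; have : t ^+ 2 == 1 by rewrite expr2 -{1}tVt mulVf.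
  by rewrite sqrf_eq1 => /orP[] /eqP->; rewrite ?sq_N1 ?is_square1.
have fiber u : (u \in [set x | ~~ is_square x]) && (pair_prod u == pair_prod t) =
    (u == t) || (u == t^-1).
  rewrite inE; have [->|u0] := eqVneq u 0.
    by rewrite is_square0 /= ![0 == _]eq_sym invr_eq0 (negPf t0).
  rewrite pair_prod_eq //; case: eqVneq => [->|_] /=; first by rewrite nsq_t.
  by case: eqVneq => [->|_]; rewrite ?andbF // is_squareV nsq_t.
rewrite (eq_bigl _ _ fiber) (bigD1 t) ?eqxx //= (big_pred1 t^-1) // => u.
by case: (eqVneq u t) => [->|_]; rewrite /= ?andbT ?andbF // eq_sym (negPf tV_neq_t).
Qed.

End SquareMinusOne.

Lemma prod_nonsquare_split4 : \prod_(a | nonsquare_split 4 a) a = 2 :> F.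
Proof.
have [sq_N1|nsq_N1] := boolP (is_square (-1 : F)).
  exact: prod_nonsquare_split4_even.
exact: prod_nonsquare_split4_odd.
Qed.

Lemma prod_opp_nonsquare_split4 :
  \prod_(a | nonsquare_split 4 (- a)) a = (-1) ^+ #|nonsquare_split (4 : F)| * 2 :> F.
Proof.
rewrite (reindex_inj oppr_inj) /=; under eq_bigl => a do rewrite opprK.
by rewrite prodrN prod_nonsquare_split4.
Qed.

Lemma odd_card_nonsquare_split4 :
  odd #|nonsquare_split (4 : F)| = (#|F| %% 8 == 3)%N || (#|F| %% 8 == 5)%N.
Proof.
have := card_nonsquare_split four_neq0 is_square4; rewrite is_square_N1.
have := card_F; set n := #|nonsquare_split 4|; set q := #|F|.
rewrite -[q./2]odd_double_half -[n]odd_double_half.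
by case: (odd q./2); case: (odd n) => /= ? ?; apply/esym; lia.
Qed.

End OddFiniteField.

Theorem theorem6p2 (F : finFieldType) (hodd : odd #|F|) :
  (\prod_(a : F | (a != 0) && ~~ is_square a && ~~ is_square (4 - a)) a = 2)
  /\ ((#|F| %% 8 == 1)%N || (#|F| %% 8 == 7)%N ->
      \prod_(a : F | (a != 0) && ~~ is_square (- a) && ~~ is_square (4 + a)) a = 2)
  /\ ((#|F| %% 8 == 3)%N || (#|F| %% 8 == 5)%N ->
      \prod_(a : F | (a != 0) && ~~ is_square (- a) && ~~ is_square (4 + a)) a = -2).
Proof.
have prod_opp : \prod_(a : F | (a != 0) && ~~ is_square (- a) && ~~ is_square (4 + a)) a
    = (-1) ^+ odd #|nonsquare_split (4 : F)| * 2.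
  rewrite signr_odd -prod_opp_nonsquare_split4 //; apply: eq_bigl => a.
  by rewrite nonsquare_splitE oppr_eq0 opprK.
rewrite prod_opp odd_card_nonsquare_split4 //; split.
  by rewrite -(prod_nonsquare_split4 hodd); apply: eq_bigl => a; rewrite nonsquare_splitE.
split=> [mod8|->]; last by rewrite expr1 mulN1r.
by rewrite (_ : _ || _ = false) ?mul1r //; case/orP: mod8 => /eqP->.
Qed.
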